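(* Let $\Sigma$ be a finite alphabet and $\$\notin\Sigma$. If $L_1,\dots,L_n\subseteq\Sigma^*$ are languages each definable by a regulated $\mathsf{C\text{-}RASP}$ formula over $\Sigma$, then the language $L_1\$L_2\$\cdots\$L_n\subseteq(\Sigma\cup\{\$\})^*$ is definable by a $\mathsf{C\text{-}RASP}$ formula.
   Context: $\mathsf{C\text{-}RASP}$ formulas over a finite alphabet $\Sigma$: $\phi ::= \sigma \mid \Diamond^{-}\phi \mid \Box^{-}\phi \mid \neg\phi \mid \phi_1\wedge\phi_2 \mid \sum_{t\in\mathcal{T}}\alpha_t t\sim k$, terms $t ::= \#[\phi] \mid c$, with $\sigma\in\Sigma$, $\alpha_t,k,c\in\mathbb{Z}$, ${\sim}\in\{<,\le,=,\ge,>\}$. Semantics at position $i$ of $w=w_1\cdots w_n$: $w,i\models\sigma$ iff $w_i=\sigma$; Boolean connectives as usual; $w,i\models\Diamond^{-}\phi$ iff $w,j\models\phi$ for some $j<i$; $w,i\models\Box^{-}\phi$ iff $w,j\models\phi$ for all $j\le i$; $\#[\phi]$ evaluates to $|\{j\in[1,i]: w,j\models\phi\}|$, $c$ to $c$, comparisons are integer comparisons. $w\models\phi$ iff $w,|w|\models\phi$, and $\phi$ defines $L(\phi)=\{w: w\models\phi\}$. A formula is regulated if no atomic formula $\sigma$ occurs outside the scope of a counting operator $\#$. *)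

From mathcomp Require Import all_boot all_order all_algebra.
Set Implicit Arguments. Unset Strict Implicit. Unset Printing Implicit Defensive.
Import Order.TTheory GRing.Theory Num.Theory.
Local Open Scope ring_scope.

Inductive cmp := CLt | CLe | CEq | CGe | CGt.

Definition cmp_eval (c : cmp) (x y : int) : bool :=
  match c with
  | CLt => x < y | CLe => x <= y | CEq => x == y | CGe => x >= y | CGt => x > y
  end.

(* Formulas over alphabet S. A linear combination sum_t alpha_t t of terms
   t ::= #[phi] | c is represented by the list-like type [lin]. *)
Inductive form (S : Type) : Type :=
| FSym : S -> form S
| FDia : form S -> form S
| FBox : form S -> form S
| FNot : form S -> form S
| FAnd : form S -> form S -> form S
| FCmp : lin S -> cmp -> int -> form S
with lin (S : Type) : Type :=
| LNil : lin S
| LCount : int -> form S -> lin S -> lin S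
| LConst : int -> int -> lin S -> lin S.

Arguments FSym {S}. Arguments FDia {S}. Arguments FBox {S}. Arguments FNot {S}.
Arguments FAnd {S}. Arguments FCmp {S}. Arguments LNil {S}.
Arguments LCount {S}. Arguments LConst {S}.

(* Positions are 1..size w; w_i = nth (i-1). *)
Fixpoint sat {S : eqType} (f : form S) (w : seq S) (i : nat) {struct f} : bool :=
  match f with
  | FSym a => (0 < i)%N && (nth None (map Some w) i.-1 == Some a)
  | FDia g => has (fun j => sat g w j) (iota 1 i.-1)
  | FBox g => all (fun j => sat g w j) (iota 1 i)
  | FNot g => ~~ sat g w i
  | FAnd g h => sat g w i && sat h w i
  | FCmp l c k => cmp_eval c (lval l w i) k
  end
with lval {S : eqType} (l : lin S) (w : seq S) (i : nat) {struct l} : int :=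
  match l with
  | LNil => 0
  | LCount a g r => a * (count (fun j => sat g w j) (iota 1 i))%:Z + lval r w i
  | LConst a c r => a * c + lval r w i
  end.

Definition models {S : eqType} (w : seq S) (f : form S) : bool := sat f w (size w).

(* regulated: no atomic formula outside the scope of a counting operator *)
Fixpoint regulated {S : Type} (f : form S) : bool :=
  match f with
  | FSym _ => false
  | FDia g | FBox g | FNot g => regulated g
  | FAnd g h => regulated g && regulated h
  | FCmp _ _ _ => true
  end.

Definition definable {S : eqType} (L : seq S -> Prop) : Prop :=
  exists f : form S, forall w, L w <-> models w f.

Definition reg_definable {S : eqType} (L : seq S -> Prop) : Prop :=
  exists f : form S, regulated f /\ forall w, L w <-> models w f.

(* Alphabet Sigma ∪ {$} is option S, with $ = None. *)
Fixpoint sepjoin {S : Type} (ws : seq (seq S)) : seq (option S) :=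
  match ws with
  | [::] => [::]
  | [:: u] => map Some u
  | u :: rest => map Some u ++ None :: sepjoin rest
  end.

Definition sepconcat {S : Type} (n : nat) (L : nat -> seq S -> Prop)
  (w : seq (option S)) : Prop :=
  exists ws : seq (seq S), size ws = n /\
    (forall i, (i < n)%N -> L i (nth [::] ws i)) /\ w = sepjoin ws.

From Pilot Require Import Defs.
From mathcomp Require Import all_boot all_order all_algebra.
Set Implicit Arguments. Unset Strict Implicit. Unset Printing Implicit Defensive.
Import Order.TTheory GRing.Theory Num.Theory.

(* Write w = u_0 $ u_1 $ ... $ u_(n-1).  A position of w lies in block k iff it
   is not a $ and exactly k $'s occur up to it, and the i-th position of block k
   carries the i-th letter of u_k.  Relativizing a formula to block k (every
   count #[g] becomes #[in block k /\ g'], every box is restricted to the block,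
   and the strict diamond gets a correction term) yields a formula whose counts
   and modalities at any position i of w only see the prefix of u_k of length
   "number of block-k positions up to i".  Atoms, however, are only read
   correctly at positions inside the block; since the translation is evaluated
   at the last position of w, which is generally outside block k, this is where
   regulatedness is needed.  The conjunction of the n relativized formulas with
   #[$] = n - 1 then defines the concatenation. *)

Local Notation form := Defs.form.
Local Notation lin := Defs.lin.

Scheme form_lin_ind := Induction for form Sort Prop
  with lin_form_ind := Induction for lin Sort Prop.

Lemma bounded_choice (T : Type) (x0 : T) (P : nat -> T -> Prop) n :
  (forall i, i < n -> exists x, P i x) -> exists F : nat -> T, forall i, i < n -> P i (F i).
Proof.
elim: n => [|n IHn] exP; first by exists (fun=> x0).
have [F PF] : exists F : nat -> T, forall i, i < n -> P i (F i).
  by apply: IHn => i hi; apply: exP; rewrite ltnS ltnW.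
have [x Px] := exP n (ltnSn n).
exists (fun i => if i == n then x else F i) => i; rewrite ltnS leq_eqVlt.
by case: eqP => [-> //|_ /= /PF].
Qed.

Lemma count_iota1S (p : pred nat) n :
  count p (iota 1 n.+1) = count p (iota 1 n) + p n.+1.
Proof. by rewrite -(addn1 n) iotaD count_cat /= addn0 add1n addn1. Qed.

Lemma count_iota1_pred (p : pred nat) n :
  count p (iota 1 n) = count p (iota 1 n.-1) + ((0 < n) && p n).
Proof. by case: n => [|n]; rewrite ?count_iota1S. Qed.

Lemma count_iota1_gt0 (p : pred nat) j : 0 < j -> p j -> 0 < count p (iota 1 j).
Proof.
move=> j_gt0 pj; rewrite -has_count; apply/hasP.
by exists j; rewrite // mem_iota j_gt0 add1n ltnSn.
Qed.

Lemma count_iota1_shift (p q : pred nat) n :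
  (forall i, 0 < i -> p i.+1 = q i) -> count p (iota 1 n.+1) = p 1 + count q (iota 1 n).
Proof.
move=> pq; rewrite /= -[2]/(1 + 1) iotaDl count_map; congr (_ + _).
by apply: eq_in_count => i; rewrite mem_iota => /andP[/pq + _].
Qed.

Lemma count_iota1_rank (sel p : pred nat) n :
  count (fun j => sel j && p (count sel (iota 1 j))) (iota 1 n) =
  count p (iota 1 (count sel (iota 1 n))).
Proof.
elim: n => [|n IHn] //; rewrite !count_iota1S IHn.
by case: (sel n.+1); rewrite ?addn0 // addn1 count_iota1S.
Qed.

Definition FTrue {T} : form T := FCmp LNil CEq 0%R.
Definition FOr {T} (f g : form T) : form T := FNot (FAnd (FNot f) (FNot g)).
Definition FAll {T} (fs : seq (form T)) : form T := foldr FAnd FTrue fs.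
Definition FCount {T} (f : form T) (c : cmp) (m : nat) : form T :=
  FCmp (LCount 1%R f LNil) c (Posz m).

Definition letter {T} (w : seq T) (i : nat) : option T := nth None (map Some w) i.-1.

Lemma letter_cons T (x : T) w j : 0 < j -> letter (x :: w) j.+1 = letter w j.
Proof. by case: j. Qed.

Section FormulaSemantics.
Variable T : eqType.
Implicit Types (f g : form T) (w : seq T).

Lemma sat_FOr f g w i : sat (FOr f g) w i = sat f w i || sat g w i.
Proof. by rewrite /FOr /= negb_and !negbK. Qed.

Lemma sat_FAll fs w i : sat (FAll fs) w i = all (fun f => sat f w i) fs.
Proof. by elim: fs => //= f fs ->. Qed.

Lemma sat_FCount f c m w i :
  sat (FCount f c m) w i = cmp_eval c (Posz (count (sat f w) (iota 1 i))) (Posz m).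
Proof. by rewrite /FCount /= mul1r addr0. Qed.

Lemma sat_sym_cons (a x : T) w j : 0 < j -> sat (FSym a) (x :: w) j.+1 = sat (FSym a) w j.
Proof. by case: j. Qed.

Lemma count_sym_cons (a x : T) w n :
  count (sat (FSym a) (x :: w)) (iota 1 n.+1) = (x == a) + count (sat (FSym a) w) (iota 1 n).
Proof. exact/count_iota1_shift/sat_sym_cons. Qed.

Lemma count_sym (a : T) w : count (sat (FSym a) w) (iota 1 (size w)) = count_mem a w.
Proof. by elim: w => // x w IHw; rewrite count_sym_cons IHw. Qed.

End FormulaSemantics.

Opaque FOr FCount.

Section Relativize.
Variables (S : eqType) (sel : form (option S)).

(* [FDia g] holds at rank c iff g holds somewhere in [1, c), i.e. iff the
   count of g over [1, c] exceeds the indicator [here] of "c > 0 and g at c". *)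
Fixpoint relativize (f : form S) : form (option S) :=
  match f with
  | FSym a => FSym (Some a)
  | FDia g =>
      let here := FAnd (FCount sel CGe 1) (relativize g) in
      let hits := FAnd sel (relativize g) in
      FOr (FAnd here (FCount hits CGe 2)) (FAnd (FNot here) (FCount hits CGe 1))
  | FBox g => FBox (FNot (FAnd sel (FNot (relativize g))))
  | FNot g => FNot (relativize g)
  | FAnd g h => FAnd (relativize g) (relativize h)
  | FCmp l c m => FCmp (relativize_lin l) c m
  end
with relativize_lin (l : lin S) : lin (option S) :=
  match l with
  | LNil => LNil
  | LCount a g r => LCount a (FAnd sel (relativize g)) (relativize_lin r)
  | LConst a c r => LConst a c (relativize_lin r)
  end.

Variables (w : seq (option S)) (u : seq S) (N : nat).
Local Notation rank i := (count (sat sel w) (iota 1 i)).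
Hypothesis letter_sel :
  forall j, 0 < j -> j <= N -> sat sel w j -> letter w j = Some (letter u (rank j)).

Local Notation agrees f i := (sat (relativize f) w i = sat f u (rank i)).
Local Notation agrees_on_sel f i :=
  (forall j, 0 < j -> j <= i -> sat sel w j -> agrees f j).

Lemma count_relativize g i : agrees_on_sel g i ->
  count (sat (FAnd sel (relativize g)) w) (iota 1 i) = count (sat g u) (iota 1 (rank i)).
Proof.
move=> gi; rewrite -count_iota1_rank; apply: eq_in_count => j.
rewrite mem_iota add1n ltnS => /andP[j_gt0 le_ji] /=.
by case sel_j: (sat sel w j); rewrite //= gi.
Qed.

Lemma agrees_sym a i : 0 < i -> i <= N -> sat sel w i -> agrees (FSym a) i.
Proof.
move=> i_gt0 le_iN sel_i; rewrite /= i_gt0 count_iota1_gt0 //=.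
by rewrite -/(letter w i) -/(letter u _) letter_sel.
Qed.

Lemma agrees_dia g i : agrees_on_sel g i -> agrees g i -> agrees (FDia g) i.
Proof.
move=> gi g_i; rewrite /= sat_FOr /= !sat_FCount /= !lez_nat !count_relativize //.
rewrite g_i has_count (count_iota1_pred _ (rank i)).
by case: ((0 < rank i) && _) => /=; rewrite ?orbF ?addn0 ?addn1 ?ltnS.
Qed.

Lemma agrees_box g i : agrees_on_sel g i -> agrees (FBox g) i.
Proof.
move=> gi; rewrite /= -[all _ (iota 1 i)]negbK -[all _ (iota 1 (rank i))]negbK.
rewrite -!has_predC !has_count -count_iota1_rank; congr (~~ (0 < _)).
apply: eq_in_count => j; rewrite mem_iota add1n ltnS => /andP[j_gt0 le_ji] /=.
by case sel_j: (sat sel w j); rewrite //= negbK gi.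
Qed.

Lemma agrees_relativize f :
  forall i, i <= N -> regulated f || (0 < i) && sat sel w i -> agrees f i.
Proof.
pose Q l := forall i, i <= N -> lval (relativize_lin l) w i = lval l u (rank i).
have on_sel g i : (forall i, i <= N -> regulated g || (0 < i) && sat sel w i -> agrees g i) ->
    i <= N -> agrees_on_sel g i.
  by move=> Pg le_iN j j_gt0 le_ji sel_j; rewrite Pg ?j_gt0 ?sel_j ?orbT ?(leq_trans le_ji).
move: f; apply: (@form_lin_ind S _ Q).
- by move=> a i le_iN /andP[i_gt0 sel_i]; apply: agrees_sym.
- by move=> g IHg i le_iN hi; apply: agrees_dia; [apply: on_sel | apply: IHg].
- by move=> g IHg i le_iN _; apply/agrees_box/on_sel.
- by move=> g IHg i le_iN hi; rewrite /= IHg.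
- move=> g IHg h IHh i le_iN /= hi.
  have [hg hh] : (regulated g || (0 < i) && sat sel w i) /\
                 (regulated h || (0 < i) && sat sel w i).
    by case/orP: hi => [/andP[-> ->]|->]; rewrite ?orbT.
  by rewrite /= IHg ?IHh.
- by move=> l IHl c m i le_iN _; rewrite /= IHl.
- by [].
- by move=> a g IHg r IHr i le_iN /=; rewrite count_relativize ?IHr //; apply: on_sel.
- by move=> a c r IHr i le_iN /=; rewrite IHr.
Qed.

End Relativize.

Section Blocks.
Variable S : eqType.
Implicit Types (w : seq (option S)) (ws : seq (seq S)).

Fixpoint sepsplit w : seq (seq S) :=
  match w with
  | [::] => [:: [::]]
  | Some a :: r => (a :: head [::] (sepsplit r)) :: behead (sepsplit r)
  | None :: r => [::] :: sepsplit r
  end.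

Lemma sepsplitE w : sepsplit w = head [::] (sepsplit w) :: behead (sepsplit w).
Proof. by case: w => [|[a|] w]. Qed.

Lemma size_sepsplit w : size (sepsplit w) = (count_mem None w).+1.
Proof. by elim: w => [|[a|] w IHw] //=; rewrite ?size_behead IHw. Qed.

Lemma sepjoin_cons_cons a s ws : sepjoin ((a :: s) :: ws) = Some a :: sepjoin (s :: ws).
Proof. by case: ws. Qed.

Lemma sepjoin_sepsplit w : sepjoin (sepsplit w) = w.
Proof.
elim: w => [|[a|] w IHw] //; rewrite [sepsplit _]/=.
  by rewrite sepjoin_cons_cons -sepsplitE IHw.
by rewrite -{2}IHw sepsplitE.
Qed.

Lemma sepsplit_cat_some u t s ws :
  sepsplit t = s :: ws -> sepsplit (map Some u ++ t) = (u ++ s) :: ws.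
Proof. by move=> split_t; elim: u => //= a u ->. Qed.

Lemma sepsplit_sepjoin ws : ws != [::] -> sepsplit (sepjoin ws) = ws.
Proof.
elim: ws => // u [|s ws] IHws _.
  by rewrite /= -[map Some u]cats0 (@sepsplit_cat_some _ _ [::] [::]) ?cats0.
rewrite (@sepsplit_cat_some u (None :: sepjoin (s :: ws)) [::] (s :: ws)) ?cats0 //.
exact: (f_equal (cons [::]) (IHws isT)).
Qed.

Definition block k w : seq S := nth [::] (sepsplit w) k.

Lemma block_Some k a w : block k (Some a :: w) = if k is 0 then a :: block 0 w else block k w.
Proof. by case: k => [|k]; rewrite /block /= ?nth0 ?nth_behead. Qed.

Lemma block_None k w : block k (None :: w) = if k is k'.+1 then block k' w else [::].
Proof. by case: k. Qed.

Lemma sepconcat_block n (L : nat -> seq S -> Prop) w : 0 < n ->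
  sepconcat n L w <-> count_mem None w = n.-1 /\ (forall k, k < n -> L k (block k w)).
Proof.
move=> n_gt0; split=> [[ws [size_ws [L_ws ->]]] | [count_w L_w]].
  have ws_nil : ws != [::] by rewrite -size_eq0 size_ws -lt0n.
  rewrite /block sepsplit_sepjoin //; split=> //.
  by rewrite -size_ws -{2}(sepsplit_sepjoin ws_nil) size_sepsplit.
exists (sepsplit w); split; first by rewrite size_sepsplit count_w prednK.
by split; last by rewrite sepjoin_sepsplit.
Qed.

Definition block_form k : form (option S) :=
  FAnd (FNot (FSym None)) (FCount (FSym None) CEq k).

Definition in_block k w j :=
  ~~ sat (FSym None) w j && (count (sat (FSym None) w) (iota 1 j) == k).

Local Notation block_rank k w j := (count (in_block k w) (iota 1 j)).

Lemma sat_block_form k w j : sat (block_form k) w j = in_block k w j.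
Proof. by rewrite /block_form /in_block /= sat_FCount /= eqz_nat. Qed.

Lemma in_block_cons1 k x w : in_block k (x :: w) 1 = (x != None) && (k == 0).
Proof. by case: x => [a|]; rewrite /in_block /= ?addn0 1?eq_sym. Qed.

Lemma in_block_cons k x w j : 0 < j ->
  in_block k (x :: w) j.+1 = ~~ sat (FSym None) w j &&
                             ((x == None) + count (sat (FSym None) w) (iota 1 j) == k).
Proof. by move=> j_gt0; rewrite /in_block sat_sym_cons // count_sym_cons. Qed.

Lemma in_block_Some k a w j : 0 < j -> in_block k (Some a :: w) j.+1 = in_block k w j.
Proof. exact: in_block_cons. Qed.

Lemma in_block_None0 w j : 0 < j -> in_block 0 (None :: w) j = false.
Proof. by case: j => [|[|j]] // _; rewrite ?in_block_cons1 ?in_block_cons // andbF. Qed.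

Lemma in_block_NoneS k w j : 0 < j -> in_block k.+1 (None :: w) j.+1 = in_block k w j.
Proof. exact: in_block_cons. Qed.

Lemma block_rank_Some k a w j : block_rank k (Some a :: w) j.+1 = (k == 0) + block_rank k w j.
Proof. by rewrite (count_iota1_shift _ (in_block_Some k a w)) in_block_cons1. Qed.

Lemma block_rank_None0 w j : block_rank 0 (None :: w) j = 0.
Proof.
rewrite (@eq_in_count _ _ pred0) ?count_pred0 // => i.
by rewrite mem_iota => /andP[/(in_block_None0 w)].
Qed.

Lemma block_rank_NoneS k w j : block_rank k.+1 (None :: w) j.+1 = block_rank k w j.
Proof. by rewrite (count_iota1_shift _ (in_block_NoneS k w)) in_block_cons1. Qed.

Lemma block_spec k w :
  block_rank k w (size w) = size (block k w) /\
  forall j, 0 < j -> j <= size w -> in_block k w j ->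
    letter w j = Some (letter (block k w) (block_rank k w j)).
Proof.
elim: w k => [|x w IHw] k.
  by split=> [|[|j] //]; case: k => [|k]; rewrite /block /= ?nth_nil.
case: x => [a|]; case: k => [|k].
- have [size_0 letter_0] := IHw 0; rewrite block_Some block_rank_Some size_0.
  split=> // -[|[|j]] // _; rewrite ltnS => le_jw.
  rewrite in_block_Some // block_rank_Some add1n => in_j.
  have rank_gt0 := count_iota1_gt0 (ltn0Sn j) in_j.
  by rewrite !letter_cons // letter_0.
- have [size_k letter_k] := IHw k.+1; rewrite block_Some block_rank_Some size_k.
  split=> // -[|[|j]] // _; rewrite ?in_block_cons1 // ltnS => le_jw.
  by rewrite in_block_Some // block_rank_Some letter_cons //; apply: letter_k.
- by split=> [|j j_gt0 _]; rewrite ?block_rank_None0 ?in_block_None0.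
- have [size_k letter_k] := IHw k; rewrite block_None block_rank_NoneS size_k.
  split=> // -[|[|j]] // _; rewrite ?in_block_cons1 // ltnS => le_jw.
  by rewrite in_block_NoneS // block_rank_NoneS letter_cons //; apply: letter_k.
Qed.

Lemma models_relativize_block k (f : form S) w : regulated f ->
  models w (relativize (block_form k) f) = models (block k w) f.
Proof.
move=> reg_f; have [size_k letter_k] := block_spec k w.
rewrite /models (@agrees_relativize _ _ w (block k w) (size w)) ?reg_f //.
  by rewrite (eq_count (sat_block_form k w)) size_k.
move=> j j_gt0 le_jw; rewrite (eq_count (sat_block_form k w)) sat_block_form.
exact: letter_k.
Qed.

End Blocks.

Arguments block_form {S}.

Theorem lemma3p5 (S : finType) (n : nat) (L : nat -> seq S -> Prop) :
  (0 < n)%N ->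
  (forall i, (i < n)%N -> reg_definable (L i)) ->
  definable (sepconcat n L).
Proof.
move=> n_gt0 /(bounded_choice FTrue) [F def_F].
exists (FAnd (FCount (FSym None) CEq n.-1)
             (FAll [seq relativize (block_form k) (F k) | k <- iota 0 n])).
move=> w; apply: iff_trans (sepconcat_block L w n_gt0) _.
rewrite /models /= sat_FCount sat_FAll all_map count_sym /= eqz_nat.
split=> [[-> L_w] | /andP[/eqP count_w /allP L_w]].
  rewrite eqxx; apply/allP => k; rewrite mem_iota => /= lt_kn.
  have [reg_k def_k] := def_F k lt_kn.
  by rewrite -/(models w _) models_relativize_block //; apply/def_k/L_w.
split=> // k lt_kn; have [reg_k def_k] := def_F k lt_kn.
by apply/def_k; rewrite -models_relativize_block //; apply: L_w; rewrite mem_iota.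
Qed.
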